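(* Let $T$ be a tree on $n\geq 3$ vertices having exactly $p$ pendant vertices (vertices of degree $1$). Then $$\mathrm{rank}(\mathrm{Max4PC}_T)=2(n-p).$$
   Context: For a tree $T$ with vertex set $V$, $|V|=n$, let $d_{x,y}$ denote the distance (number of edges on the path) between vertices $x,y$ in $T$. The maximum four point condition matrix $\mathrm{Max4PC}_T$ is the $\binom{n}{2}\times\binom{n}{2}$ matrix whose rows and columns are indexed by the $2$-element subsets of $V$, and whose entry in the row indexed by $\{w,x\}$ and the column indexed by $\{y,z\}$ is $$\max\{d_{w,x}+d_{y,z},\ d_{w,y}+d_{x,z},\ d_{w,z}+d_{x,y}\}.$$ *)

From HB Require Import structures.
From mathcomp Require Import all_boot all_order all_algebra.
Set Implicit Arguments. Unset Strict Implicit. Unset Printing Implicit Defensive.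
Import Order.TTheory GRing.Theory Num.Theory.

Section Defs.
Variable V : finType.
Variable e : rel V.

(* A simple graph on V is given by a symmetric irreflexive relation e. *)
Definition connected_graph : Prop := forall x y : V, connect e x y.

Definition acyclic_graph : Prop := forall c : seq V, ucycle e c -> size c < 3.

Definition is_tree : Prop :=
  [/\ symmetric e, irreflexive e, connected_graph & acyclic_graph].

Definition deg (x : V) : nat := #|[set y | e x y]|.

Definition npendant : nat := #|[set x | deg x == 1]|.

Definition walk_of_len (x y : V) (k : nat) : bool :=
  [exists t : k.-tuple V, path e x t && (last x t == y)].

(* distance: the least k such that there is a walk with k edges from x to y
   (for connected graphs some k < #|V| works; the value #|V| is a dummy
   default, never reached for connected graphs). *)
Definition dist (x y : V) : nat := find (walk_of_len x y) (iota 0 #|V|).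

Definition max4 (w x y z : V) : nat :=
  maxn (dist w x + dist y z) (maxn (dist w y + dist x z) (dist w z + dist x y)).

(* entry for 2-element subsets A = {w,x}, B = {y,z}; max4 is invariant under
   swapping w,x or y,z, so the choice of enumeration order is irrelevant. *)
Definition max4pc_entry (A B : {set V}) : nat :=
  match enum A, enum B with
  | [:: w; x], [:: y; z] => max4 w x y z
  | _, _ => 0
  end.

Definition pairs := {A : {set V} | #|A| == 2}.

Definition Max4PC (R : nzRingType) : 'M[R]_(#|{: pairs}|) :=
  \matrix_(i, j) ((max4pc_entry (val (enum_val i)) (val (enum_val j)))%:R)%R.

End Defs.

From HB Require Import structures.
From mathcomp Require Import all_boot all_order all_algebra.
From mathcomp Require Import zify ring lra.
Set Implicit Arguments. Unset Strict Implicit. Unset Printing Implicit Defensive.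
Import GRing.Theory Num.Theory.

(* Root the tree at a vertex [r] whose degree is not 1, write |x| for the depth
   of [x], and let the meet depth m(s) of a list [s] of vertices count the
   non-root common ancestors of [s].
   Then d(x, y) = |x| + |y| - 2 m(x, y), and since the ancestors of a vertex form
   a chain, among m(a, b), m(a, c), m(b, c) the minimum m(a, b, c) is attained
   twice. An elementary case analysis then gives
     max4(w, x, y, z) = |w| + |x| + |y| + |z| - 2 (sum of the four triple meets)
                        + 4 m(w, x, y, z).
   Writing each meet depth as a sum over vertices [v] of ancestor indicators
   factors Max4PC as X Y^T: the columns of X are indexed by the internal vertices
   [v] and a bit, and hold [v <= w /\ v <= x] and [v <= w \/ v <= x] (for the
   root, 1 and |w| + |x|); leaves contribute nothing, being ancestors of a single
   vertex. The columns of X and of Y are linearly independent, so the rank is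
   twice the number of internal vertices, 2 (n - p). *)

Section Distance.
Variables (V : finType) (e : rel V).

Lemma walk_of_lenP x y k :
  reflect (exists2 s : seq V, size s = k & path e x s && (last x s == y))
          (walk_of_len e x y k).
Proof.
apply: (iffP existsP) => [[t Ht]|[s Hs Hp]]; first by exists (val t); rewrite ?size_tuple.
by exists (@Tuple k V s (introT eqP Hs)).
Qed.

Lemma walk_of_len0 x y : walk_of_len e x y 0 = (x == y).
Proof.
apply/walk_of_lenP/eqP => [[s Hs /andP[_ /eqP <-]]|->]; first by case: s Hs.
by exists [::]; rewrite //= eqxx.
Qed.

Lemma walk_of_lenS x y k :
  walk_of_len e x y k.+1 -> exists2 z, e x z & walk_of_len e z y k.
Proof.
move/walk_of_lenP=> [[|z s] //= [Hs] /andP[/andP[exz Hp] Hl]]; exists z => //.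
by apply/walk_of_lenP; exists s => //; rewrite Hp.
Qed.

Lemma walk_of_len_cons x y z k :
  e x z -> walk_of_len e z y k -> walk_of_len e x y k.+1.
Proof.
move=> exz /walk_of_lenP[s Hs /andP[Hp Hl]]; apply/walk_of_lenP; exists (z :: s).
  by rewrite /= Hs.
by rewrite /= exz Hp.
Qed.

Hypothesis e_connected : connected_graph e.

Lemma walk_of_len_lt_card x y : exists2 k, k < #|V| & walk_of_len e x y k.
Proof.
have /connectP[p Hp ->] := e_connected x y.
have [p' Hp' Hu _] := shortenP Hp.
exists (size p'); first by have := max_card (mem (x :: p')); rewrite (card_uniqP Hu).
by apply/walk_of_lenP; exists p' => //; rewrite Hp' eqxx.
Qed.

Lemma dist_lt_card x y : dist e x y < #|V|.
Proof.
have [k Hk Hw] := walk_of_len_lt_card x y.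
rewrite /dist -[X in _ < X](size_iota 0 #|V|) -has_find.
by apply/hasP; exists k => //; rewrite mem_iota.
Qed.

Lemma dist_walk x y : walk_of_len e x y (dist e x y).
Proof.
have Hlt := dist_lt_card x y; move: (Hlt).
rewrite /dist -[X in _ < X](size_iota 0 #|V|) -has_find.
by move/(nth_find 0); rewrite nth_iota.
Qed.

Lemma dist_le x y k : walk_of_len e x y k -> dist e x y <= k.
Proof.
move=> Hw; have [Hk|Hk] := ltnP k #|V|; last exact: leq_trans (ltnW (dist_lt_card x y)) Hk.
rewrite leqNgt; apply/negP => Hlt.
by have := before_find 0 Hlt; rewrite nth_iota // add0n Hw.
Qed.

Lemma dist_eq0 x y : (dist e x y == 0) = (x == y).
Proof.
apply/eqP/eqP => [H|->]; first by have := dist_walk x y; rewrite H walk_of_len0 => /eqP.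
by apply/eqP; rewrite -leqn0 dist_le // walk_of_len0.
Qed.

Lemma dist_edge x y z : e x z -> dist e x y <= (dist e z y).+1.
Proof. by move=> exz; apply: dist_le; apply: walk_of_len_cons exz (dist_walk _ _). Qed.

Lemma dist_step x y : x != y -> exists2 z, e x z & (dist e z y).+1 = dist e x y.
Proof.
move=> nxy; have := dist_walk x y.
case Dxy: (dist e x y) => [|k]; first by move/eqP: Dxy; rewrite dist_eq0 (negbTE nxy).
move=> /walk_of_lenS[z exz Hw]; exists z => //.
by have := dist_le Hw; have := dist_edge y exz; rewrite Dxy; lia.
Qed.

Lemma dist_unique (D : V -> V -> nat) :
  (forall x, D x x = 0) ->
  (forall x y z, e x z -> D x y <= (D z y).+1) ->
  (forall x y, x != y -> exists2 z, e x z & (D z y).+1 = D x y) ->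
  forall x y, D x y = dist e x y.
Proof.
move=> D0 D_edge D_step.
have walk_D k x y : D x y = k -> walk_of_len e x y k.
  elim: k x y => [|k IHk] x y Dk.
    rewrite walk_of_len0; apply: contraT => nxy.
    by have [z _] := D_step _ _ nxy; rewrite Dk.
  have nxy : x != y by apply: contra_eq_neq Dk => ->; rewrite D0.
  have [z exz] := D_step _ _ nxy; rewrite Dk => -[Dz].
  exact: walk_of_len_cons exz (IHk _ _ Dz).
have D_le k x y : walk_of_len e x y k -> D x y <= k.
  elim: k x y => [|k IHk] x y; first by rewrite walk_of_len0 => /eqP->; rewrite D0.
  by move=> /walk_of_lenS[z exz /IHk Dz]; apply: leq_trans (D_edge _ y _ exz) _.
move=> x y; apply/eqP; rewrite eqn_leq D_le ?dist_walk //.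
exact: dist_le (walk_D _ _ _ erefl).
Qed.

End Distance.

Section RootedTree.
Variables (V : finType) (e : rel V).
Hypotheses (e_sym : symmetric e) (e_irr : irreflexive e).
Hypotheses (e_connected : connected_graph e) (e_acyclic : acyclic_graph e).
Variable r : V.

Definition depth x := dist e x r.

Definition parent x :=
  if x == r then r else odflt x [pick z | e x z && ((depth z).+1 == depth x)].

Lemma depth_root : depth r = 0.
Proof. by apply/eqP; rewrite dist_eq0. Qed.

Lemma depth_eq0 x : (depth x == 0) = (x == r).
Proof. exact: dist_eq0. Qed.

Lemma parent_root : parent r = r.
Proof. by rewrite /parent eqxx. Qed.

Lemma parent_spec x : x != r -> e x (parent x) /\ (depth (parent x)).+1 = depth x.
Proof.
move=> nxr; rewrite /parent (negbTE nxr).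
case: pickP => [z /andP[exz /eqP Dz] //|no_parent].
have [z exz Dz] := dist_step e_connected nxr.
by have := no_parent z; rewrite exz Dz eqxx.
Qed.

Lemma depth_parent x : depth (parent x) = (depth x).-1.
Proof.
have [->|nxr] := eqVneq x r; first by rewrite parent_root depth_root.
by have [_ <-] := parent_spec nxr.
Qed.

Lemma depth_edge x z : e x z -> depth x <= (depth z).+1.
Proof. exact: dist_edge. Qed.

Lemma depth_iter_parent k x : depth (iter k parent x) = depth x - k.
Proof. by elim: k => [|k IHk] /=; rewrite ?subn0 // depth_parent IHk; lia. Qed.

Lemma iter_parent_root k x : depth x <= k -> iter k parent x = r.
Proof. by move=> Dx; apply/eqP; rewrite -depth_eq0 depth_iter_parent; lia. Qed.

Definition root_path y := traject parent (parent y) (depth y).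

Lemma path_root_path y : path e y (root_path y).
Proof.
rewrite /root_path; move: {-2}(depth y) (leqnn (depth y)) => n.
elim: n y => [//|n IHn] x Dx.
have nxr : x != r by rewrite -depth_eq0; lia.
have [exp Dp] := parent_spec nxr.
by rewrite trajectS /= exp IHn //; lia.
Qed.

Lemma last_root_path y : last y (root_path y) = r.
Proof. by rewrite /root_path last_traject iter_parent_root. Qed.

Lemma depth_root_path y z : z \in root_path y -> depth z < depth y.
Proof. by move=> /trajectP[i Hi ->]; rewrite -iterSr depth_iter_parent; lia. Qed.

Lemma walk_via_root a b :
  exists q, [/\ path e a q, last a q = b & {subset q <= root_path a ++ b :: root_path b}].
Proof.
pose q := rev (belast b (root_path b)).
have Hq : path e r q.
  by rewrite -(last_root_path b) rev_path (eq_path (e' := e)) ?path_root_path // => x y;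
    rewrite e_sym.
have Hlast : last r q = b.
  by rewrite /q -(last_root_path b); case: (root_path b) => //= y p; rewrite rev_cons last_rcons.
exists (root_path a ++ q); rewrite cat_path last_cat path_root_path last_root_path Hq Hlast.
split=> // z; rewrite !mem_cat mem_rev => /orP[->//|/mem_belast ->]; exact: orbT.
Qed.

Lemma no_cycle_through a b x q :
  path e a q -> last a q = b -> a != b -> x \notin a :: q -> e x a -> e b x -> False.
Proof.
move=> Hp; have [q' Hq' Hu Hsub] := shortenP Hp; move=> Hl nab nx exa ebx.
have nxq' : x \notin a :: q'.
  by apply: contra nx; rewrite !inE => /orP[->//|/Hsub ->]; rewrite orbT.
have := e_acyclic (c := x :: a :: q'); rewrite /ucycle /= rcons_path Hq' Hl exa ebx nxq'.
move: Hu => /= /andP[-> ->] /=.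
by case: q' {Hq' Hsub nxq'} Hl => [/= Hab|y l _]; [rewrite Hab eqxx in nab|move/(_ isT)].
Qed.

Lemma depth_edge_neq x z : e x z -> depth x != depth z.
Proof.
move=> exz; apply/eqP => Dxz.
have nxz : x != z by apply: contraTneq exz => ->; rewrite e_irr.
have [xr|nxr] := eqVneq x r.
  by move/eqP: Dxz nxz; rewrite xr depth_root eq_sym depth_eq0 => /eqP->; rewrite eqxx.
have [exp Dp] := parent_spec nxr.
(* going up to [parent x], over the root to [z] and back to [x] would close a cycle *)
have [q [Hq Hl Hsub]] := walk_via_root (parent x) z.
apply: (no_cycle_through Hq Hl _ _ exp); last by rewrite e_sym.
  by apply/eqP => pz; move: Dp; rewrite pz Dxz; lia.
rewrite inE negb_or; apply/andP; split; first by apply/eqP => xp; move: Dp; rewrite -xp; lia.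
apply/negP => /Hsub; rewrite mem_cat inE => /or3P[/depth_root_path|/eqP xz|/depth_root_path].
- lia.
- by rewrite xz eqxx in nxz.
- by rewrite Dxz ltnn.
Qed.

Lemma parent_unique x z : e x z -> (depth z).+1 = depth x -> z = parent x.
Proof.
move=> exz Dz; have nxr : x != r by rewrite -depth_eq0 -Dz.
have [exp Dp] := parent_spec nxr.
have [//|nzp] := eqVneq z (parent x); exfalso.
have [q [Hq Hl Hsub]] := walk_via_root z (parent x).
apply: (no_cycle_through Hq Hl nzp _ exz); last by rewrite e_sym.
rewrite inE negb_or; apply/andP; split; first by apply/eqP => xz; move: Dz; rewrite xz; lia.
apply/negP => /Hsub; rewrite mem_cat inE => /or3P[/depth_root_path|/eqP xp|/depth_root_path].
- lia.
- by move: Dp; rewrite -xp; lia.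
- lia.
Qed.

Lemma edge_parent x z : e x z -> z = parent x \/ x = parent z.
Proof.
move=> exz; have ezx : e z x by rewrite e_sym.
have Dxz := depth_edge exz; have Dzx := depth_edge ezx.
case: ltngtP (depth_edge_neq exz) => // Dlt _; [right|left].
  by apply: parent_unique ezx _; lia.
by apply: parent_unique exz _; lia.
Qed.

Definition ancestor v x :=
  (depth v <= depth x) && (iter (depth x - depth v) parent x == v).

Lemma ancestorP v x : reflect (exists k, v = iter k parent x) (ancestor v x).
Proof.
apply: (iffP andP) => [[_ /eqP <-]|[k ->]]; first by exists (depth x - depth v).
have [Dk|Dk] := leqP k (depth x).
  by rewrite depth_iter_parent; split; [lia|rewrite (_ : _ - _ = k) //; lia].
by rewrite !iter_parent_root ?depth_root ?subn0 //; lia.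
Qed.

Lemma ancestor_refl x : ancestor x x.
Proof. by apply/ancestorP; exists 0. Qed.

Lemma ancestor_root x : ancestor r x.
Proof. by apply/ancestorP; exists (depth x); rewrite iter_parent_root. Qed.

Lemma ancestor_of_root v : ancestor v r -> v = r.
Proof. by move/ancestorP=> [k ->]; rewrite iter_parent_root // depth_root. Qed.

Lemma ancestor_trans u v x : ancestor u v -> ancestor v x -> ancestor u x.
Proof.
by move=> /ancestorP[j ->] /ancestorP[k ->]; apply/ancestorP; exists (j + k); rewrite iterD.
Qed.

Lemma ancestor_total u v x : ancestor u x -> ancestor v x -> ancestor u v || ancestor v u.
Proof.
move=> /ancestorP[i ->] /ancestorP[j ->]; have [ji|ij] := leqP j i.
  by apply/orP; left; apply/ancestorP; exists (i - j); rewrite -iterD subnK.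
by apply/orP; right; apply/ancestorP; exists (j - i); rewrite -iterD subnK // ltnW.
Qed.

Lemma depth_ancestor v x : ancestor v x -> depth v <= depth x.
Proof. by case/andP. Qed.

Lemma ancestor_depth_eq v x : ancestor v x -> depth v = depth x -> v = x.
Proof. by move=> /andP[_ /eqP Dv] Dvx; rewrite -Dv Dvx subnn. Qed.

Lemma ancestorS v x : x != r -> ancestor v x = (v == x) || ancestor v (parent x).
Proof.
move=> nxr; apply/ancestorP/orP => [[[|k] ->]|[/eqP->|/ancestorP[k ->]]].
- by left.
- by right; apply/ancestorP; exists k; rewrite iterSr.
- by exists 0.
- by exists k.+1; rewrite iterSr.
Qed.

Lemma parent_not_ancestor x : x != r -> ~~ ancestor x (parent x).
Proof.
by move=> nxr; apply/negP => /depth_ancestor; have [_ <-] := parent_spec nxr; rewrite ltnn.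
Qed.

Lemma ancestor_child x y :
  ancestor x y -> x != y -> exists c, [/\ parent c = x, c != r & ancestor c y].
Proof.
move=> /andP[Dxy /eqP Exy] nxy.
have Dlt : depth x < depth y.
  by rewrite ltn_neqAle Dxy andbT; apply: contra_neq nxy => Dx; rewrite -Exy Dx subnn.
exists (iter (depth y - depth x).-1 parent y); split.
- by rewrite -iterS prednK ?subn_gt0.
- by rewrite -depth_eq0 depth_iter_parent; lia.
- by apply/ancestorP; eexists.
Qed.

Definition meet_depth (s : seq V) := #|[set v | (v != r) && all (ancestor v) s]|.

Lemma eq_meet_depth s t :
  (forall v, all (ancestor v) s = all (ancestor v) t) -> meet_depth s = meet_depth t.
Proof. by move=> Est; apply: eq_card => v; rewrite !inE Est. Qed.

Lemma meet_depth_rot n s : meet_depth (rot n s) = meet_depth s.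
Proof. by apply: eq_meet_depth => v; apply/perm_all; rewrite perm_rot. Qed.

Lemma meet_depth_sub s t : {subset s <= t} -> meet_depth t <= meet_depth s.
Proof.
move=> st; apply/subset_leq_card/subsetP => v; rewrite !inE => /andP[-> /allP tv].
by apply/allP => u /st /tv.
Qed.

Lemma meet_depth_cons_parent x s : x != r ->
  meet_depth (x :: s) = meet_depth (parent x :: s) + all (ancestor x) s.
Proof.
move=> nxr; rewrite /meet_depth; set A := [set v | _ && all _ (parent x :: s)].
have [xs|nxs] := boolP (all (ancestor x) s).
  have xA : x \notin A by rewrite inE /= (negbTE (parent_not_ancestor nxr)) andbF.
  transitivity #|x |: A|; last by rewrite cardsU1 xA addnC.
  apply: eq_card => v.
  rewrite !inE /= ancestorS //.
  by case: (eqVneq v x) => [->|_] /=; rewrite ?nxr ?xs.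
rewrite /= addn0; apply: eq_card => v; rewrite !inE /= ancestorS //.
by case: (eqVneq v x) => [->|_] /=; rewrite ?(negbTE nxs) ?andbF.
Qed.

Lemma meet_depth1 x : meet_depth [:: x] = depth x.
Proof.
move: {-1}(depth x) (erefl (depth x)) => n; elim: n x => [|n IHn] x Dx.
  move/eqP: Dx; rewrite depth_eq0 => /eqP->; apply/eqP; rewrite cards_eq0.
  apply/eqP/setP => v; rewrite !inE /= andbT.
  by apply/negP => /andP[nvr /ancestor_of_root vr]; rewrite vr eqxx in nvr.
have nxr : x != r by rewrite -depth_eq0 Dx.
by rewrite meet_depth_cons_parent // (IHn (parent x)) ?addn1 // depth_parent Dx.
Qed.

Lemma meet_depth2_le x y : meet_depth [:: x; y] <= minn (depth x) (depth y).
Proof.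
rewrite leq_min -{1}meet_depth1 -[depth y]meet_depth1.
by rewrite !meet_depth_sub // => u; rewrite !inE => ->; rewrite ?orbT.
Qed.

Lemma dist_meet x y : dist e x y + 2 * meet_depth [:: x; y] = depth x + depth y.
Proof.
pose D a b := depth a + depth b - 2 * meet_depth [:: a; b].
suff -> : dist e x y = D x y by have := meet_depth2_le x y; rewrite /D; lia.
have D_parent a b : a != r -> D a b + (ancestor a b).*2 = (D (parent a) b).+1.
  move=> nar; have := meet_depth_cons_parent [:: b] nar; rewrite /= andbT => Mab.
  have := parent_spec nar; have := meet_depth2_le a b; have := meet_depth2_le (parent a) b.
  by rewrite /D; case: (ancestor a b) Mab => /=; lia.
symmetry; apply: (dist_unique e_connected) => {x y} [x|x y z exz|x y nxy].
- rewrite /D (_ : meet_depth [:: x; x] = depth x); first lia.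
  by rewrite -meet_depth1; apply: eq_meet_depth => v /=; rewrite andbA andbb.
- case: (edge_parent exz) => [Ez|Ex].
    have nxr : x != r by apply: contraTneq exz; rewrite Ez => ->; rewrite parent_root e_irr.
    by rewrite Ez; have := D_parent x y nxr; case: (ancestor x y) => /=; lia.
  have nzr : z != r by apply: contraTneq exz; rewrite Ex => ->; rewrite parent_root e_irr.
  by rewrite Ex; have := D_parent z y nzr; case: (ancestor z y) => /=; lia.
- have [Axy|nAxy] := boolP (ancestor x y).
    have [c [<- ncr Acy]] := ancestor_child Axy nxy.
    exists c; first by rewrite e_sym; case: (parent_spec ncr).
    by have := D_parent c y ncr; rewrite Acy; lia.
  have nxr : x != r by apply: contraNneq nAxy => ->; exact: ancestor_root.
  exists (parent x); first by case: (parent_spec nxr).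
  by have := D_parent x y nxr; rewrite (negbTE nAxy); lia.
Qed.

(* The ancestors of [a] form a chain. *)
Lemma meet_depth_laminar a s b c :
  meet_depth (a :: s ++ [:: b; c]) = meet_depth (a :: s ++ [:: b]) \/
  meet_depth (a :: s ++ [:: b; c]) = meet_depth (a :: s ++ [:: c]).
Proof.
have allE v t :
    all (ancestor v) (a :: s ++ t) = ancestor v a && all (ancestor v) s && all (ancestor v) t.
  by rewrite /= all_cat andbA.
have [above_b_c|] :=
  boolP [forall v, [&& ancestor v a, all (ancestor v) s & ancestor v b] ==> ancestor v c].
  left; apply: eq_meet_depth => v; rewrite !allE /= !andbT.
  move/forallP/(_ v): above_b_c.
  by case: (ancestor v a); case: (all _ s); case: (ancestor v b); case: (ancestor v c).
move/forallPn=> [u]; rewrite negb_imply => /andP[/and3P[Aua Aus Aub] nAuc].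
right; apply: eq_meet_depth => v; rewrite !allE /= !andbT.
have [Ava|] := boolP (ancestor v a); last by rewrite !andFb.
have [Avs|] := boolP (all (ancestor v) s); last by rewrite !andbF.
have [Avc|] := boolP (ancestor v c); last by rewrite !andbF.
case/orP: (ancestor_total Aua Ava) => [Auv|Avu]; last by rewrite (ancestor_trans Avu Aub).
by rewrite (ancestor_trans Auv Avc) in nAuc.
Qed.

Definition min_attained_twice (t p q u : nat) :=
  [/\ t <= p, t <= q, t <= u & (t = p /\ t = q \/ t = p /\ t = u \/ t = q /\ t = u)].

Lemma meet_depth3 a b c :
  min_attained_twice (meet_depth [:: a; b; c])
    (meet_depth [:: a; b]) (meet_depth [:: a; c]) (meet_depth [:: b; c]).
Proof.
have sub3 (s : seq V) : {subset s <= [:: a; b; c]} -> meet_depth [:: a; b; c] <= meet_depth s.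
  exact: meet_depth_sub.
split; try by apply: sub3 => u; rewrite !inE => /orP[->|->]; rewrite ?orbT.
have := meet_depth_laminar a [::] b c; have := meet_depth_laminar b [::] c a.
have := meet_depth_laminar c [::] a b.
rewrite /= (meet_depth_rot 1 [:: a; b; c]) (meet_depth_rot 2 [:: a; b; c]).
rewrite (meet_depth_rot 1 [:: a; b]) (meet_depth_rot 1 [:: a; c]).
by rewrite (meet_depth_rot 1 [:: b; c]); lia.
Qed.

Lemma min_pairing_sum (pwx pwy pwz pxy pxz pyz twxy twxz twyz txyz m : nat) :
  min_attained_twice twxy pwx pwy pxy -> min_attained_twice twxz pwx pwz pxz ->
  min_attained_twice twyz pwy pwz pyz -> min_attained_twice txyz pxy pxz pyz ->
  m <= twyz -> m <= txyz -> m = twxy \/ m = twxz ->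
  minn (pwx + pyz) (minn (pwy + pxz) (pwz + pxy)) + 2 * m = twxy + twxz + twyz + txyz.
Proof.
move=> [? ? ? T1] [? ? ? T2] [? ? ? T3] [? ? ? T4] ? ? M.
by case: M => ?; case: T1 => [[? ?]|[[? ?]|[? ?]]]; case: T2 => [[? ?]|[[? ?]|[? ?]]];
  case: T3 => [[? ?]|[[? ?]|[? ?]]]; case: T4 => [[? ?]|[[? ?]|[? ?]]]; lia.
Qed.

Lemma max4_meet_depth w x y z :
  max4 e w x y z + 2 * (meet_depth [:: w; x; y] + meet_depth [:: w; x; z] +
                        meet_depth [:: w; y; z] + meet_depth [:: x; y; z])
  = depth w + depth x + depth y + depth z + 4 * meet_depth [:: w; x; y; z].
Proof.
have Mle s : {subset s <= [:: w; x; y; z]} -> meet_depth [:: w; x; y; z] <= meet_depth s.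
  exact: meet_depth_sub.
have M_wyz : meet_depth [:: w; x; y; z] <= meet_depth [:: w; y; z].
  by apply: Mle => u; rewrite !inE => /or3P[] ->; rewrite ?orbT.
have M_xyz : meet_depth [:: w; x; y; z] <= meet_depth [:: x; y; z].
  by apply: Mle => u; rewrite !inE => /or3P[] ->; rewrite ?orbT.
have := min_pairing_sum (meet_depth3 w x y) (meet_depth3 w x z) (meet_depth3 w y z)
  (meet_depth3 x y z) M_wyz M_xyz (meet_depth_laminar w [:: x] y z).
have := dist_meet w x; have := dist_meet y z; have := dist_meet w y.
have := dist_meet x z; have := dist_meet w z; have := dist_meet x y.
rewrite /max4; lia.
Qed.

Lemma child_neighbor c : c != r -> c \in [set y | e (parent c) y].
Proof. by move=> ncr; rewrite inE e_sym; case: (parent_spec ncr). Qed.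

Lemma deg_gt1 v c : v != r -> parent c = v -> c != r -> 1 < deg e v.
Proof.
move=> nvr pc ncr; subst v; have [epv Dp] := parent_spec nvr; have [_ Dc] := parent_spec ncr.
have ncp : c != parent (parent c).
  by apply/eqP => /(congr1 depth); lia.
rewrite /deg (cardD1 c) child_neighbor // ltnS; apply/card_gt0P.
by exists (parent (parent c)); rewrite !inE eq_sym ncp.
Qed.

Lemma leaf_ancestor v x : v != r -> deg e v = 1 -> ancestor v x -> x = v.
Proof.
move=> nvr dv Avx; have [//|nvx] := eqVneq v x.
have [c [pc ncr _]] := ancestor_child Avx nvx.
by have := deg_gt1 nvr pc ncr; rewrite dv.
Qed.

Lemma deg1_parent v : v != r -> [set y | e v y] \subset [set parent v] -> deg e v = 1.
Proof.
move=> nvr sub; rewrite /deg (_ : [set y | e v y] = [set parent v]) ?cards1 //.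
by apply/eqP; rewrite eqEsubset sub sub1set inE; case: (parent_spec nvr).
Qed.

Lemma internal_child v : v != r -> deg e v != 1 -> exists c, parent c = v /\ c != r.
Proof.
move=> nvr dv; have [/existsP[c /andP[/eqP pc ncr]]|no_child] :=
  boolP [exists c, (parent c == v) && (c != r)]; first by exists c.
case/negP: dv; apply/eqP/deg1_parent/subsetP => // z; rewrite !inE => evz.
case: (edge_parent evz) => [->//|vp].
move/existsPn/(_ z): no_child; rewrite -vp eqxx negbK => /eqP zr.
by move: nvr; rewrite vp zr parent_root eqxx.
Qed.

Lemma leaf_exists : 1 < #|V| -> exists2 x, x != r & deg e x = 1.
Proof.
move=> V2; have /set0Pn[y] : [set~ r] != set0 by rewrite -card_gt0 cardsC1; lia.
rewrite !inE => nyr; have [x _ x_deepest] := @arg_maxnP V r xpredT depth isT.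
have nxr : x != r.
  apply: contraNneq nyr => xr; rewrite -depth_eq0 -leqn0.
  by have := x_deepest y isT; rewrite xr depth_root.
exists x; first exact: nxr.
apply: (deg1_parent nxr); apply/subsetP => z; rewrite !inE => exz.
case: (edge_parent exz) => [->//|xp].
have nzr : z != r by apply: contraNneq nxr => zr; rewrite xp zr parent_root.
have [_] := parent_spec nzr; rewrite -xp; have := x_deepest z isT; lia.
Qed.

Lemma internal_exists : 2 < #|V| -> exists v, deg e v != 1.
Proof.
move=> V3; have [x _ x_deepest] := @arg_maxnP V r xpredT depth isT.
have [D2|D1] := leqP 2 (depth x).
  have nxr : x != r by rewrite -depth_eq0; lia.
  have npr : parent x != r by rewrite -depth_eq0 depth_parent; lia.
  by exists (parent x); rewrite neq_ltn (deg_gt1 npr erefl nxr) orbT.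
exists r; rewrite neq_ltn; apply/orP; right.
apply: (@leq_trans #|[set~ r]|); first by rewrite cardsC1; lia.
apply/subset_leq_card/subsetP => y; rewrite !inE => nyr.
have <- : parent y = r.
  by apply/eqP; rewrite -depth_eq0 depth_parent; have := x_deepest y isT; lia.
by rewrite e_sym; case: (parent_spec nyr).
Qed.

Lemma non_descendant_exists v :
  v != r -> deg e r != 1 -> exists y, ~~ ancestor v y /\ y != parent v.
Proof.
move=> nvr dr; have [pvr|npvr] := eqVneq (parent v) r; last first.
  by exists r; rewrite eq_sym npvr; split => //; apply: contra nvr => /ancestor_of_root ->.
have : ~~ ([set y | e r y] \subset [set v]).
  apply: contra dr => sub; rewrite /deg (_ : [set y | e r y] = [set v]) ?cards1 //.
  by apply/eqP; rewrite eqEsubset sub sub1set -pvr child_neighbor.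
case/subsetPn => z; rewrite !inE => erz nzv.
have nzr : z != r by apply: contraTneq erz => ->; rewrite e_irr.
have rz : parent z = r.
  by case: (edge_parent erz) => [zr|//]; move: erz; rewrite zr parent_root e_irr.
exists z; split; last by rewrite pvr.
apply: contra nzv => Avz; apply/eqP/esym/(ancestor_depth_eq Avz).
by have [_ <-] := parent_spec nvr; have [_ <-] := parent_spec nzr; rewrite pvr rz.
Qed.

Definition inner v := (deg e v != 1) && (v != r).

Definition pair_fst (A : {set V}) := nth r (enum A) 0.
Definition pair_snd (A : {set V}) := nth r (enum A) 1.

Lemma enum_pair (A : {set V}) : #|A| = 2 -> enum A = [:: pair_fst A; pair_snd A].
Proof. by rewrite cardE /pair_fst /pair_snd; case: (enum A) => [|a [|b []]]. Qed.

Lemma card_set2 (w x : V) : w != x -> #|[set w; x]| == 2.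
Proof. by rewrite cards2 => ->. Qed.

Lemma pair_fst_snd_sym T (F : V -> V -> T) w x : (forall a b, F a b = F b a) ->
  w != x -> F (pair_fst [set w; x]) (pair_snd [set w; x]) = F w x.
Proof.
move=> FC nwx; have E := enum_pair (eqP (card_set2 nwx)).
have wE : w \in enum [set w; x] by rewrite mem_enum !inE eqxx.
have xE : x \in enum [set w; x] by rewrite mem_enum !inE eqxx orbT.
move: wE xE nwx; rewrite E; move: (pair_fst _) (pair_snd _) => p q.
by rewrite !inE => /orP[]/eqP-> /orP[]/eqP->; rewrite ?eqxx // => _; apply: FC.
Qed.

Section InternalRoot.
Local Open Scope ring_scope.
Variable R : realFieldType.
Hypotheses (r_internal : deg e r != 1%N) (V3 : (2 < #|V|)%N).

Section Independence.
Variables (a b : R) (al be : V -> R).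
Hypothesis vanish : forall w x, w != x ->
  a + b * (depth w + depth x)%:R +
  \sum_(v | inner v) (al v * (ancestor v w && ancestor v x)%:R +
                      be v * (ancestor v w || ancestor v x)%:R) = 0.

Let potential x := b * (depth x)%:R + \sum_(v | inner v) be v * (ancestor v x)%:R.
Let coupling w x := \sum_(v | inner v) (al v - be v) * ((ancestor v w)%:R * (ancestor v x)%:R).

Lemma vanish_potential w x : w != x -> a + potential w + potential x + coupling w x = 0.
Proof.
move=> nwx; rewrite -(vanish nwx) /potential /coupling natrD.
have and_or (p q : bool) (s t : R) :
    s * (p && q)%:R + t * (p || q)%:R = t * p%:R + t * q%:R + (s - t) * (p%:R * q%:R).
  by case: p; case: q => /=; ring.
under [X in _ = _ + _ * _ + X]eq_bigr do rewrite and_or.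
by rewrite !big_split /=; ring.
Qed.

Lemma potential_root : potential r = 0.
Proof.
rewrite /potential depth_root mulr0 add0r big1 // => v /andP[_ nvr].
by case: (boolP (ancestor v r)) => [/ancestor_of_root vr|]; [rewrite vr eqxx in nvr|rewrite mulr0].
Qed.

Lemma potential_parent x : x != r ->
  potential x = potential (parent x) + b + (if inner x then be x else 0).
Proof.
move=> nxr; rewrite /potential; have [_ <-] := parent_spec nxr.
have -> : \sum_(v | inner v) be v * (ancestor v x)%:R =
    \sum_(v | inner v) be v * (ancestor v (parent x))%:R + \sum_(v | inner v) be v * (v == x)%:R.
  rewrite -big_split /=; apply: eq_bigr => v _; rewrite ancestorS //.
  case: (eqVneq v x) => [->|] /=; last by rewrite mulr0 addr0.
  by rewrite (negbTE (parent_not_ancestor nxr)) mulr0 add0r.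
have -> : \sum_(v | inner v) be v * (v == x)%:R = if inner x then be x else 0.
  case: ifP => Ix.
    by rewrite (bigD1 x) //= eqxx mulr1 big1 ?addr0 // => v /andP[_ /negbTE->]; rewrite mulr0.
  by apply: big1 => v Iv; case: eqP => [vx|]; [rewrite vx Ix in Iv|rewrite mulr0].
by rewrite -addn1 natrD; ring.
Qed.

Lemma inner_coefs_eq v : inner v -> al v = be v.
Proof.
move=> Iv; have /andP[dv nvr] := Iv.
have [c [pc ncr]] := internal_child nvr dv.
have [y [nAvy nyp]] := non_descendant_exists nvr r_internal.
have [_ Dc] := parent_spec ncr; have [_ Dv] := parent_spec nvr.
have nvc : v != c by apply/eqP => /(congr1 depth); rewrite -Dc pc; lia.
have npc : parent v != c by apply/eqP => /(congr1 depth); rewrite -Dc pc; lia.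
have nvy : v != y by apply: contraNneq nAvy => <-; exact: ancestor_refl.
have npy : parent v != y by rewrite eq_sym.
have Avc : ancestor v c by apply/ancestorP; exists 1%N; rewrite /= pc.
(* [a] and the potentials cancel from this alternating combination *)
have : coupling v c + coupling (parent v) y - coupling v y - coupling (parent v) c = 0.
  have := vanish_potential nvc; have := vanish_potential npc.
  by have := vanish_potential nvy; have := vanish_potential npy; lra.
(* [v] is the only vertex that is an ancestor of exactly one of [v] and [parent v] *)
rewrite /coupling -big_split -!sumrB /= (bigD1 v) //= big1 /=.
  rewrite ancestor_refl Avc (negbTE nAvy) (negbTE (parent_not_ancestor nvr)) /=.
  by rewrite !(mulr1, mulr0, subr0, addr0) => /eqP; rewrite subr_eq0 => /eqP.
move=> u /andP[_ nuv]; rewrite (ancestorS u nvr) (negbTE nuv) /=; ring.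
Qed.

Lemma vanishing_coefs : [/\ a = 0, b = 0 & forall v, inner v -> al v = 0 /\ be v = 0].
Proof.
have coupling0 w x : coupling w x = 0.
  by rewrite /coupling big1 // => v Iv; rewrite inner_coefs_eq // subrr mul0r.
have potential_nonroot x : x != r -> potential x = - a.
  by move=> nxr; have := vanish_potential nxr; rewrite potential_root coupling0; lra.
have [x1 [x2 [n1 n2 n12]]] : exists x1 x2, [/\ x1 != r, x2 != r & x1 != x2].
  have /card_gt1P[x1 [x2 []]] : (1 < #|[set~ r]|)%N by rewrite cardsC1; lia.
  by rewrite !inE => n1 n2 n12; exists x1, x2.
have a0 : a = 0.
  by have := vanish_potential n12; rewrite coupling0 !potential_nonroot //; lra.
have potential0 x : potential x = 0.
  have [->|nxr] := eqVneq x r; first exact: potential_root.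
  by rewrite potential_nonroot // a0 oppr0.
have [l nlr dl] := leaf_exists (ltnW V3).
have b0 : b = 0 by have := potential_parent nlr; rewrite !potential0 /inner dl eqxx /=; lra.
have be0 v : inner v -> be v = 0.
  by move=> Iv; have := potential_parent (proj2 (andP Iv)); rewrite !potential0 Iv b0; lra.
by split => // v Iv; rewrite inner_coefs_eq // be0.
Qed.

End Independence.

Definition internal_vertex := {v : V | deg e v != 1%N}.
Definition feature := (internal_vertex * bool)%type.

Definition root_internal : internal_vertex := exist _ r r_internal.

Definition pair_feature (w x : V) (j : feature) : R :=
  let v := val j.1 in
  if v == r then (if j.2 then (depth w + depth x)%:R else 1)
  else (if j.2 then ancestor v w || ancestor v x else ancestor v w && ancestor v x)%:R.

Definition dual_feature (w x : V) (j : feature) : R :=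
  (if val j.1 == r then 1 else -2) * pair_feature w x (j.1, ~~ j.2).

Lemma pair_featureC w x j : pair_feature w x j = pair_feature x w j.
Proof. by rewrite /pair_feature addnC orbC andbC. Qed.

Lemma dual_featureC w x j : dual_feature w x j = dual_feature x w j.
Proof. by rewrite /dual_feature pair_featureC. Qed.

Lemma sum_feature (F : feature -> R) :
  \sum_j F j = \sum_(s : internal_vertex) (F (s, false) + F (s, true)).
Proof.
rewrite (eq_bigr (fun j => F (j.1, j.2))) => [|[] //].
by rewrite -(pair_bigA _ (fun s b => F (s, b))) /=; apply: eq_bigr => s _; rewrite big_bool addrC.
Qed.

Lemma sum_internal_vertex (G : V -> R) :
  \sum_(s : internal_vertex) G (val s) = G r + \sum_(v | inner v) G v.
Proof. by rewrite -(big_sub (fun v => deg e v != 1%N)) (bigD1 r). Qed.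

Lemma sum_pair_feature (c : feature -> R) w x :
  \sum_j c j * pair_feature w x j =
    c (root_internal, false) + c (root_internal, true) * (depth w + depth x)%:R +
    \sum_(v | inner v) (c (insubd root_internal v, false) * (ancestor v w && ancestor v x)%:R +
                        c (insubd root_internal v, true) * (ancestor v w || ancestor v x)%:R).
Proof.
rewrite sum_feature.
pose G v :=
  if v == r then c (root_internal, false) + c (root_internal, true) * (depth w + depth x)%:R
  else c (insubd root_internal v, false) * (ancestor v w && ancestor v x)%:R +
       c (insubd root_internal v, true) * (ancestor v w || ancestor v x)%:R.
rewrite (eq_bigr (G \o val)) => [|s _]; last first.
  rewrite /G /pair_feature /= valKd; case: eqVneq => // sr.
  by rewrite mulr1 (_ : s = root_internal) //; apply: val_inj.
rewrite sum_internal_vertex /G eqxx; congr (_ + _).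
by apply: eq_bigr => v /andP[_ /negbTE->].
Qed.

Lemma pair_feature_free (c : feature -> R) :
  (forall w x, w != x -> \sum_j c j * pair_feature w x j = 0) -> forall j, c j = 0.
Proof.
move=> vanish; have [c_root0 c_root1 c_inner] := vanishing_coefs
  (fun w x nwx => etrans (esym (sum_pair_feature c w x)) (vanish w x nwx)).
move=> [s b]; have [sr|nsr] := eqVneq (val s) r.
  have -> : s = root_internal by apply: val_inj.
  by case: b.
have Is : inner (val s) by rewrite /inner nsr andbT; exact: valP s.
by have [] := c_inner _ Is; rewrite valKd; case: b.
Qed.

Lemma dual_feature_free (c : feature -> R) :
  (forall w x, w != x -> \sum_j c j * dual_feature w x j = 0) -> forall j, c j = 0.
Proof.
move=> vanish.
pose flip (j : feature) := (j.1, ~~ j.2).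
have flipK : involutive flip by case=> s b; rewrite /flip negbK.
pose scale (s : internal_vertex) : R := if val s == r then 1 else -2.
have scale_neq0 s : scale s != 0.
  by rewrite /scale; case: ifP => _; rewrite ?oner_eq0 // oppr_eq0 pnatr_eq0.
have c_flip0 : forall j, c (flip j) * scale j.1 = 0.
  apply: (@pair_feature_free (fun j => c (flip j) * scale j.1)) => w x nwx.
  rewrite -[RHS](vanish w x nwx) (reindex_inj (inv_inj flipK)) /=.
  by apply: eq_bigr => -[s b] _; rewrite /dual_feature /flip /= negbK mulrA.
move=> j; have /eqP := c_flip0 (flip j).
by rewrite flipK mulf_eq0 (negbTE (scale_neq0 _)) orbF => /eqP.
Qed.

Lemma meet_depth_sum s : (meet_depth s)%:R = \sum_(v | v != r) (all (ancestor v) s)%:R :> R.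
Proof.
rewrite /meet_depth -sum1_card natr_sum big_mkcond [RHS]big_mkcond /=.
by apply: eq_bigr => v _; rewrite inE; case: (v != r); case: (all _ _).
Qed.

Lemma max4_feature w x y z : w != x -> y != z ->
  (max4 e w x y z)%:R = \sum_j pair_feature w x j * dual_feature y z j.
Proof.
move=> nwx nyz; rewrite sum_feature.
pose G v : R := if v == r then (depth y + depth z)%:R + (depth w + depth x)%:R else
  -2 * ((ancestor v w && ancestor v x)%:R * (ancestor v y || ancestor v z)%:R +
        (ancestor v w || ancestor v x)%:R * (ancestor v y && ancestor v z)%:R).
rewrite (eq_bigr (G \o val)) => [|s _]; last first.
  by rewrite /dual_feature /pair_feature /G /=; case: eqVneq => _ /=; ring.
rewrite sum_internal_vertex /G eqxx.
have -> : \sum_(v | inner v) G v = -2 * \sum_(v | v != r)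
    ((all (ancestor v) [:: w; x; y])%:R + (all (ancestor v) [:: w; x; z])%:R +
     (all (ancestor v) [:: w; y; z])%:R + (all (ancestor v) [:: x; y; z])%:R -
     2 * (all (ancestor v) [:: w; x; y; z])%:R).
  rewrite mulr_sumr big_mkcond [RHS]big_mkcond /=; apply: eq_bigr => v _.
  rewrite /G /inner; have [->|nvr] := eqVneq v r; first by rewrite andbF.
  rewrite andbT /=; have [dv|_] /= := eqVneq (deg e v) 1%N; last first.
    by case: (ancestor v w); case: (ancestor v x); case: (ancestor v y);
      case: (ancestor v z) => /=; ring.
  (* a leaf is an ancestor of itself only *)
  have leaf := leaf_ancestor nvr dv.
  have nAwx : ~~ (ancestor v w && ancestor v x).
    by apply/negP => /andP[/leaf wv /leaf xv]; rewrite wv xv eqxx in nwx.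
  have nAyz : ~~ (ancestor v y && ancestor v z).
    by apply/negP => /andP[/leaf yv /leaf zv]; rewrite yv zv eqxx in nyz.
  move: nAwx nAyz; case: (ancestor v w); case: (ancestor v x);
    by case: (ancestor v y); case: (ancestor v z) => //= _ _; ring.
rewrite sumrB !big_split -mulr_sumr -!meet_depth_sum.
have := congr1 (fun n : nat => n%:R : R) (max4_meet_depth w x y z).
by rewrite /= !natrD ?natrM; lra.
Qed.


Lemma sum_enum_feature (G : feature -> R) :
  \sum_(j < #|{: feature}|) G (enum_val j) = \sum_j G j.
Proof. by rewrite -(big_enum_val G); apply: eq_bigl => j; rewrite inE. Qed.

Definition feature_matrix (F : V -> V -> feature -> R) : 'M[R]_(#|{: pairs V}|, #|{: feature}|) :=
  \matrix_(i, j) F (pair_fst (val (enum_val i))) (pair_snd (val (enum_val i))) (enum_val j).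

Lemma row_free_feature_matrix F :
  (forall w x j, F w x j = F x w j) ->
  (forall c, (forall w x, w != x -> \sum_j c j * F w x j = 0) -> forall j, c j = 0) ->
  row_free (feature_matrix F)^T.
Proof.
move=> FC F_free; apply/inj_row_free => u u_ker.
suff c0 : forall j, u 0 (enum_rank j) = 0.
  by apply/rowP => k; rewrite !mxE -(enum_valK k) c0.
apply: F_free => w x nwx.
pose wx : pairs V := exist _ [set w; x] (card_set2 nwx).
have := congr1 (fun M : 'rV[R]_#|{: pairs V}| => M 0 (enum_rank wx)) u_ker.
rewrite !mxE => wx_ker; rewrite -[RHS]wx_ker -sum_enum_feature.
apply: eq_bigr => j _; rewrite !mxE enum_rankK enum_valK /=.
by rewrite (@pair_fst_snd_sym _ (fun a b => F a b (enum_val j))) // => a b; apply: FC.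
Qed.

Lemma max4pc_entry_pair (A B : pairs V) :
  max4pc_entry e (val A) (val B) =
  max4 e (pair_fst (val A)) (pair_snd (val A)) (pair_fst (val B)) (pair_snd (val B)).
Proof. by rewrite /max4pc_entry (enum_pair (eqP (valP A))) (enum_pair (eqP (valP B))). Qed.

Lemma pair_fst_neq_snd (A : pairs V) : pair_fst (val A) != pair_snd (val A).
Proof.
by have := enum_uniq (val A); rewrite (enum_pair (eqP (valP A))) /= inE andbT.
Qed.

Lemma Max4PC_factor :
  Max4PC e R = feature_matrix pair_feature *m (feature_matrix dual_feature)^T.
Proof.
apply/matrixP => i k; rewrite !mxE max4pc_entry_pair.
rewrite max4_feature ?pair_fst_neq_snd // -sum_enum_feature.
by apply: eq_bigr => j _; rewrite !mxE.
Qed.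

Lemma rank_Max4PC : \rank (Max4PC e R) = #|{: feature}|.
Proof.
have /eqP pair_free := row_free_feature_matrix pair_featureC (@pair_feature_free).
have dual_free := row_free_feature_matrix dual_featureC (@dual_feature_free).
by rewrite Max4PC_factor mxrankMfree // -mxrank_tr.
Qed.

End InternalRoot.
End RootedTree.

Theorem theorem1 (R : realFieldType) (V : finType) (e : rel V) (n p : nat) :
  is_tree e -> #|V| = n -> 3 <= n -> npendant e = p ->
  \rank (Max4PC e R) = 2 * (n - p).
Proof.
move=> [e_sym e_irr e_connected e_acyclic] <- V3 <-.
have /card_gt0P[v0 _] : 0 < #|V| by apply: leq_trans V3.
have [r r_internal] := internal_exists e_sym e_connected v0 V3.
rewrite (rank_Max4PC e_sym e_irr e_connected e_acyclic R r_internal V3).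
rewrite card_prod card_bool card_sig mulnC /npendant -(cardC [set x | deg e x == 1]) addKn.
by congr (2 * _); apply: eq_card => v; rewrite !inE.
Qed.
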